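(* For every $n\ge 3$ and every Greene–Kleitman chain $C$ in $Q_n$ with $|C|\ge 3$, the chains $f( *C* )$ and $f( *\ell(C)* )$ are connected at their bottom ends in $Q_{n+2}$. Specifically, if $C=u*C'$ with $u\in D$ and $C'$ containing at least two $*$s, then $f( *C* )=0\,u\,1\,C'\,*$ and $f( *\ell(C)* )=0\,u\,1\,\ell(C')\,*$; i.e., the chains $f( *C* )$ and $f( *\ell(C)* )$ differ in exactly two positions.
   Context: $Q_n$ is the hypercube on $\{0,1\}^n$. Let $D$ be the set of bitstrings (including the empty string) with equally many $0$s and $1$s such that every prefix has at least as many $0$s as $1$s. A Greene–Kleitman chain in $Q_n$ is a string of length $n$ over $\{0,1,*\}$ of the form $u_0*u_1*\cdots*u_{h-1}*u_h$ with all $u_j\in D$, representing the path whose vertices are obtained by replacing the $*$s by $i$ ones followed by $h-i$ zeros; $|C|=h$ is its number of $*$s, and its bottom end $b(C)$ is obtained by replacing all $*$s by $0$. For a string $C$ over $\{0,1,*\}$ with at least two $*$s, $f(C)$ (resp. $\ell(C)$) is obtained by replacing the first two (resp. last two) $*$s by $0$ and $1$, respectively. Juxtaposition denotes concatenation. Two chains are connected at their bottom ends if their bottom ends differ in exactly one position. *)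

From HB Require Import structures.
From mathcomp Require Import all_boot.
Set Implicit Arguments. Unset Strict Implicit. Unset Printing Implicit Defensive.

Inductive sym := Zero | One | Star.

Definition sym_eqb (a b : sym) : bool :=
  match a, b with
  | Zero, Zero | One, One | Star, Star => true
  | _, _ => false end.
Lemma sym_eqP : Equality.axiom sym_eqb.
Proof. by case; case; constructor. Qed.
HB.instance Definition _ := hasDecEq.Build sym sym_eqP.

Definition bit (b : bool) : sym := if b then One else Zero.

(* D : equally many 0s and 1s, every prefix has at least as many 0s as 1s.
   Checked with a running height (number of 0s minus number of 1s). *)
Fixpoint dyck_from (h : nat) (s : seq bool) : bool :=
  match s with
  | [::] => h == 0
  | false :: t => dyck_from h.+1 t
  | true :: t => (0 < h) && dyck_from h.-1 t
  end.
Definition dyck (s : seq bool) : bool := dyck_from 0 s.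

Fixpoint join_star (us : seq (seq bool)) : seq sym :=
  match us with
  | [::] => [::]
  | [:: u] => map bit u
  | u :: us' => map bit u ++ Star :: join_star us'
  end.

Definition is_GK (C : seq sym) : Prop :=
  exists us : seq (seq bool), us != [::] /\ all dyck us /\ C = join_star us.

(* |C| = number of stars *)
Definition nstars (C : seq sym) : nat := count (pred1 Star) C.

(* replace the star of index k (counted from 0, left to right) by 0 and
   the star of index k+1 by 1 *)
Fixpoint repl_from (k i : nat) (C : seq sym) : seq sym :=
  match C with
  | [::] => [::]
  | Star :: t =>
      (if i == k then Zero else if i == k.+1 then One else Star)
        :: repl_from k i.+1 t
  | x :: t => x :: repl_from k i t
  end.

Definition fC (C : seq sym) : seq sym := repl_from 0 0 C.
Definition lC (C : seq sym) : seq sym := repl_from (nstars C - 2) 0 C.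

Definition starwrap (C : seq sym) : seq sym := Star :: C ++ [:: Star].

Definition bottom (C : seq sym) : seq sym :=
  map (fun x => if x == Star then Zero else x) C.

Definition ndiff (s t : seq sym) : nat :=
  count (fun p => p.1 != p.2) (zip s t).

Definition connected_bottom (C1 C2 : seq sym) : bool :=
  (size C1 == size C2) && (ndiff (bottom C1) (bottom C2) == 1).

From mathcomp Require Import all_boot.

(* Split off the first block: C = u * C'.  Then f(*C*) turns the new leading
   star into 0 and the star after u into 1, and l(C) = u * l(C') because the
   last two stars of C lie in C'.  So f(*C*) and f(*l(C)*) share the frame
   0 u 1 _ * around C' and l(C'), which differ exactly at the last two stars
   of C', turned into 0 and 1; at the bottom ends only the position of the
   final 1 still differs. *)

Lemma nstars_cat s t : nstars (s ++ t) = nstars s + nstars t.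
Proof. exact: count_cat. Qed.

Lemma nstars_map_bit u : nstars (map bit u) = 0.
Proof. by elim: u => [|[] u IH]. Qed.

Lemma nstars_bit_star u C : nstars (map bit u ++ Star :: C) = (nstars C).+1.
Proof. by rewrite nstars_cat nstars_map_bit. Qed.

Lemma GK_split C :
  is_GK C -> 0 < nstars C ->
  exists2 u, dyck u & exists2 C', is_GK C' & C = map bit u ++ Star :: C'.
Proof.
case=> [[|u [|u' us]] [//= _ [/andP[du dus] ->]]].
  by rewrite nstars_map_bit.
by exists u => //; exists (join_star (u' :: us)) => //; exists (u' :: us).
Qed.

Lemma ndiff_cons x s t : ndiff (x :: s) (x :: t) = ndiff s t.
Proof. by rewrite /ndiff /= eqxx. Qed.

Lemma ndiff_catl p s t : ndiff (p ++ s) (p ++ t) = ndiff s t.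
Proof. by elim: p => //= x p IH; rewrite ndiff_cons. Qed.

Lemma ndiff_refl s : ndiff s s = 0.
Proof. by elim: s => //= x s IH; rewrite ndiff_cons. Qed.

Lemma ndiff_catr s t q : size s = size t -> ndiff (s ++ q) (t ++ q) = ndiff s t.
Proof. by move=> st; rewrite /ndiff zip_cat // count_cat -/(ndiff q q) ndiff_refl addn0. Qed.

Section ReplFrom.

Variable k : nat.

Lemma repl_from_cat i s t :
  repl_from k i (s ++ t) = repl_from k i s ++ repl_from k (i + nstars s) t.
Proof.
elim: s i => [|x s IH] i /=; first by rewrite addn0.
by case: x; rewrite /= IH // /nstars /= addSnnS.
Qed.

Lemma repl_from_map_bit i u : repl_from k i (map bit u) = map bit u.
Proof. by elim: u => [|[] u IH] //=; rewrite IH. Qed.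

Lemma repl_fromSS i s : repl_from k.+1 i.+1 s = repl_from k i s.
Proof. by elim: s i => [|[] s IH] i //=; rewrite IH. Qed.

Lemma repl_from_past i s : k.+1 < i -> repl_from k i s = s.
Proof.
elim: s i => [|[] s IH] i ki /=; rewrite ?IH //; last exact: ltnW.
by rewrite !gtn_eqF // ltnW.
Qed.

Lemma size_repl_from i s : size (repl_from k i s) = size s.
Proof. by elim: s i => [|[] s IH] i //=; rewrite IH. Qed.

Lemma ndiff_repl_from i s :
  ndiff s (repl_from k i s) =
  count_mem k (iota i (nstars s)) + count_mem k.+1 (iota i (nstars s)).
Proof.
elim: s i => [|x s IH] i //=; case: x; rewrite /= ?ndiff_cons ?IH //.
rewrite /ndiff /= -/(ndiff _ _) IH add0n.
case: (i =P k) => [->|_]; rewrite ?(ltn_eqF (ltnSn k)) //.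
by case: (i == k.+1); rewrite /= !add0n // addnCA.
Qed.

(* The first replaced star becomes 0, which is invisible at the bottom end. *)
Lemma ndiff_bottom_repl_from i s :
  ndiff (bottom s) (bottom (repl_from k i s)) = count_mem k.+1 (iota i (nstars s)).
Proof.
elim: s i => [|x s IH] i //=; case: x; rewrite /= ?ndiff_cons ?IH //.
rewrite /ndiff /= -/(ndiff _ _) IH add0n.
by case: (i =P k) => [->|_]; rewrite ?(ltn_eqF (ltnSn k)) //; case: (i == k.+1).
Qed.

End ReplFrom.

Lemma size_lC C : size (lC C) = size C.
Proof. exact: size_repl_from. Qed.

Lemma fC_starwrap_bit_star u C :
  fC (starwrap (map bit u ++ Star :: C)) = Zero :: map bit u ++ One :: C ++ [:: Star].
Proof.
rewrite /fC /starwrap /= -catA repl_from_cat repl_from_map_bit nstars_map_bit.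
by rewrite /= repl_from_past.
Qed.

Lemma lC_bit_star u C :
  2 <= nstars C -> lC (map bit u ++ Star :: C) = map bit u ++ Star :: lC C.
Proof.
rewrite /lC nstars_bit_star; case: (nstars C) => [|[|m]] // _.
by rewrite !subn2 repl_from_cat repl_from_map_bit nstars_map_bit /= repl_fromSS.
Qed.

Lemma fC_starwrap_lC_bit_star u C :
  2 <= nstars C ->
  fC (starwrap (lC (map bit u ++ Star :: C))) = Zero :: map bit u ++ One :: lC C ++ [:: Star].
Proof. by move=> C2; rewrite lC_bit_star // fC_starwrap_bit_star. Qed.

Lemma count_mem_iota0 x n : count_mem x (iota 0 n) = (x < n).
Proof. by rewrite count_uniq_mem ?iota_uniq // mem_iota. Qed.

Lemma ndiff_lC C : 2 <= nstars C -> ndiff C (lC C) = 2.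
Proof.
rewrite ndiff_repl_from !count_mem_iota0; case: (nstars C) => [|[|m]] // _.
by rewrite subn2 /= ltnS leqnSn ltnSn.
Qed.

Lemma ndiff_bottom_lC C : 2 <= nstars C -> ndiff (bottom C) (bottom (lC C)) = 1.
Proof.
rewrite ndiff_bottom_repl_from count_mem_iota0; case: (nstars C) => [|[|m]] // _.
by rewrite subn2 /= ltnSn.
Qed.

Theorem lemma21 (n : nat) (C : seq sym) :
  3 <= n -> size C = n -> is_GK C -> 3 <= nstars C ->
  [/\ connected_bottom (fC (starwrap C)) (fC (starwrap (lC C))),
      size (fC (starwrap C)) = size (fC (starwrap (lC C))),
      ndiff (fC (starwrap C)) (fC (starwrap (lC C))) = 2 &
      forall (u : seq bool) (C' : seq sym),
        dyck u -> C = map bit u ++ Star :: C' -> 2 <= nstars C' ->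
        fC (starwrap C) = Zero :: map bit u ++ One :: C' ++ [:: Star] /\
        fC (starwrap (lC C)) = Zero :: map bit u ++ One :: lC C' ++ [:: Star]].
Proof.
move=> _ _ GK_C C3.
have [u _ [C' _ defC]] := GK_split C GK_C (ltnW (ltnW C3)).
have C'2 : 2 <= nstars C' by rewrite -ltnS -(nstars_bit_star u) -defC.
have fC_C := fC_starwrap_bit_star u C'.
have fC_lC := fC_starwrap_lC_bit_star u C' C'2; rewrite -defC in fC_C fC_lC.
have size_eq : size (fC (starwrap C)) = size (fC (starwrap (lC C))).
  by rewrite fC_C fC_lC /= !size_cat /= !size_cat size_lC.
split=> //; last by move=> v D _ -> D2; rewrite fC_starwrap_bit_star fC_starwrap_lC_bit_star.
- rewrite /connected_bottom size_eq eqxx fC_C fC_lC /bottom !(map_cons, map_cat) /=.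
  by rewrite ndiff_cons ndiff_catl ndiff_cons ndiff_catr ?size_map ?size_lC ?ndiff_bottom_lC.
- by rewrite fC_C fC_lC ndiff_cons ndiff_catl ndiff_cons ndiff_catr ?size_lC ?ndiff_lC.
Qed.
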